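(* Let $q=rQ$ with $\gcd(r,Q)=1$, and suppose that $a_q,a_r,a_Q:\mathbb Z\to\mathbb C$ are functions of periods $q,r,Q$ respectively, bounded by $1$ in absolute value, with $a_q(n)=a_r(n)a_Q(n)$. Let $I$ be an interval of length $N$, and for a function $\phi$ set $\mathbb E(\phi):=\frac1N\sum_{n\in I}\phi(n)$. Let $M=\lfloor(N/r)^{2/3}\rfloor$ and suppose $M\ge5$. Then $$|\mathbb E(a_q)|^2\le\frac5M+\frac2{M^2}\sum_{1\le i\ne j\le M}|\mathbb E(A_{(ir,jr)})|,$$ where $A_{(ir,jr)}(n):=a_Q(n+ir)\overline{a_Q(n+jr)}$.
   Context: The sums over $I$ are over integers $n\in I$. *)

From mathcomp Require Import all_boot all_order all_algebra all_field.
Set Implicit Arguments. Unset Strict Implicit. Unset Printing Implicit Defensive.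
Import Order.TTheory GRing.Theory Num.Theory.
Local Open Scope ring_scope.

Definition avgI (a : int) (N : nat) (C : numClosedFieldType) (phi : int -> C) : C :=
  (N%:R)^-1 * \sum_(0 <= k < N) phi (a + k%:Z).

(* M = floor((N/r)^(2/3)) for naturals N, r with r > 0:
   M <= (N/r)^(2/3) < M+1  <=>  M^3 r^2 <= N^2 < (M+1)^3 r^2. *)
Definition is_floor_pow23 (N r M : nat) : Prop :=
  (M ^ 3 * r ^ 2 <= N ^ 2)%N /\ (N ^ 2 < M.+1 ^ 3 * r ^ 2)%N.

From mathcomp Require Import all_boot all_order all_algebra all_field.
From mathcomp Require Import ring zify.
Import Order.TTheory GRing.Theory Num.Theory.
Local Open Scope ring_scope.

(* Translating I by i r (1 <= i <= M) leaves a_r unchanged and moves the sum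
   of a_q = a_r a_Q by at most 2 i r.  Averaging over the M translates gives
   M N E(a_q) = sum_(n in I) a_r(n) v(n) + O(M^2 r) with
   v(n) = sum_i a_Q(n + i r).  Cauchy-Schwarz and |a_r| <= 1 bound the square
   of the main term by N sum_n |v(n)|^2, and expanding |v(n)|^2 gives the diagonal N M
   plus N times the correlations E(A_(ir,jr)), i <> j.  Since M^3 r^2 <= N^2,
   the squared error (M (M+1) r)^2 is at most 3 N^2 M / 2. *)

Lemma periodic_mul {T : Type} {f : int -> T} {r : nat} :
  (forall n, f (n + r%:Z) = f n) -> forall i n, f (n + (i * r)%N%:Z) = f n.
Proof.
move=> per; elim=> [|i IH] n; first by rewrite mul0n addr0.
by rewrite mulSn PoszD addrA IH per.
Qed.

Lemma gauss_sum (n : nat) : ((\sum_(1 <= i < n.+1) i) * 2 = n * n.+1)%N.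
Proof.
elim: n => [|n IH]; first by rewrite big_nil.
by rewrite big_nat_recr //= mulnDl IH; lia.
Qed.

Lemma shift_error_sqr_le (N M r : nat) :
  (M ^ 3 * r ^ 2 <= N ^ 2)%N -> (5 <= M)%N ->
  (2 * (M * M.+1 * r) ^ 2 <= 3 * N ^ 2 * M)%N.
Proof.
move=> hMN hM5; nia.
Qed.

Lemma norm_sum_shift_le {R : numDomainType} (f : nat -> R) (N m : nat) :
  (forall k, `|f k| <= 1) ->
  `|\sum_(0 <= k < N) f (k + m)%N - \sum_(0 <= k < N) f k| <= 2 * m%:R.
Proof.
move=> f_le1; elim: m => [|m IH].
  by under eq_bigr do rewrite addn0; rewrite subrr normr0 mulr0.
have shift1 : \sum_(0 <= k < N) f (k + m.+1)%N - \sum_(0 <= k < N) f (k + m)%N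
    = f (N + m)%N - f m.
  by rewrite -sumrB (telescope_sumr_eq (fun k => f (k + m)%N)) // => k _; rewrite addnS.
rewrite -(subrKA (\sum_(0 <= k < N) f (k + m)%N)) shift1.
rewrite -[m.+1]add1n natrD mulrDr mulr1.
apply: le_trans (ler_normD _ _) (lerD _ IH).
exact: le_trans (ler_normB _ _) (lerD (f_le1 _) (f_le1 _)).
Qed.

Lemma norm_sum_shifts_le {R : numDomainType} (f : nat -> R) (N M r : nat) :
  (forall k, `|f k| <= 1) ->
  `|\sum_(1 <= i < M.+1) (\sum_(0 <= k < N) f k - \sum_(0 <= k < N) f (k + i * r)%N)|
    <= (M * M.+1 * r)%N%:R.
Proof.
move=> f_le1; apply: le_trans (ler_norm_sum _ _ _) _.
have -> : (M * M.+1 * r = \sum_(1 <= i < M.+1) i * 2 * r)%N.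
  by rewrite -!big_distrl /= gauss_sum.
rewrite natr_sum; apply: ler_sum => i _; rewrite distrC mulnAC natrM mulrC.
exact: norm_sum_shift_le.
Qed.

Lemma sqr_sum_le {R : numDomainType} (x : nat -> R) (N : nat) :
  (forall k, x k \is Num.real) ->
  (\sum_(0 <= k < N) x k) ^+ 2 <= N%:R * \sum_(0 <= k < N) x k ^+ 2.
Proof.
move=> x_real; rewrite -(ler_pMn2r (n := 2)) //.
have -> : (\sum_(0 <= k < N) x k) ^+ 2 *+ 2
    = \sum_(0 <= k < N) \sum_(0 <= l < N) x k * x l *+ 2.
  by rewrite expr2 mulr_suml -sumrMnl; apply: eq_bigr => k _; rewrite mulr_sumr -sumrMnl.
have -> : N%:R * (\sum_(0 <= k < N) x k ^+ 2) *+ 2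
    = \sum_(0 <= k < N) \sum_(0 <= l < N) (x k ^+ 2 + x l ^+ 2).
  under [RHS]eq_bigr do rewrite big_split /= sumr_const_nat subn0.
  by rewrite big_split /= sumrMnl sumr_const_nat subn0 mulr_natl.
apply: ler_sum => k _; apply: ler_sum => l _.
exact: (real_leif_mean_square_scaled (x_real k) (x_real l)).
Qed.

Lemma sum_sqr_norm_sum_le {C : numClosedFieldType} (g : nat -> nat -> C) (N M : nat) :
  (forall k i, `|g k i| <= 1) ->
  \sum_(0 <= k < N) `|\sum_(1 <= i < M.+1) g k i| ^+ 2 <=
    (N * M)%N%:R + \sum_(1 <= i < M.+1) \sum_(1 <= j < M.+1 | i != j)
                     `|\sum_(0 <= k < N) g k i * (g k j)^*|.
Proof.
move=> g_le1.
have expand : \sum_(0 <= k < N) `|\sum_(1 <= i < M.+1) g k i| ^+ 2 =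
    \sum_(1 <= i < M.+1) \sum_(1 <= j < M.+1) \sum_(0 <= k < N) g k i * (g k j)^*.
  under eq_bigr do rewrite normCK rmorph_sum mulr_suml; rewrite exchange_big /=.
  by apply: eq_bigr => i _; under eq_bigr do rewrite mulr_sumr; rewrite exchange_big.
rewrite -[X in X <= _]ger0_norm ?sumr_ge0 // => [|k _]; last exact: exprn_ge0.
rewrite expand; apply: le_trans (ler_norm_sum _ _ _) _.
have -> : (N * M)%N%:R = \sum_(1 <= i < M.+1) (N%:R : C).
  by rewrite sumr_const_nat subSS subn0 natrM mulr_natr.
rewrite -big_split /= big_seq [leRHS]big_seq.
apply: ler_sum => i iM; rewrite (bigD1_seq i) ?iota_uniq //=.
apply: le_trans (ler_normD _ _) _; apply: lerD.
- apply: le_trans (ler_norm_sum _ _ _) _.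
  have -> : N%:R = \sum_(0 <= k < N) (1 : C) by rewrite sumr_const_nat subn0.
  by apply: ler_sum => k _; rewrite normrM norm_conjC mulr_ile1.
- under eq_bigl do rewrite eq_sym; exact: ler_norm_sum.
Qed.

Lemma sum_avgI {C : numClosedFieldType} (a : int) (N : nat) (phi : int -> C) :
  (0 < N)%N -> \sum_(0 <= k < N) phi (a + k%:Z) = N%:R * avgI a N phi.
Proof. by move=> N_gt0; rewrite /avgI mulrA mulfV ?mul1r ?pnatr_eq0 -?lt0n. Qed.

Lemma norm_sum_le_shift_average {C : numClosedFieldType} (r N M : nat) (a : int)
    (aq ar aQ : int -> C) :
  (forall n, ar (n + r%:Z) = ar n) -> (forall n, `|ar n| <= 1) ->
  (forall n, `|aq n| <= 1) -> (forall n, aq n = ar n * aQ n) ->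
  M%:R * `|\sum_(0 <= k < N) aq (a + k%:Z)| <=
    \sum_(0 <= k < N) `|\sum_(1 <= i < M.+1) aQ (a + k%:Z + (i * r)%N%:Z)|
    + (M * M.+1 * r)%N%:R.
Proof.
move=> per_r bnd_r bnd_q hmul.
set S := \sum_(0 <= k < N) _.
pose T i := \sum_(0 <= k < N) aq (a + (k + i * r)%N%:Z).
have split_S : M%:R * S = \sum_(1 <= i < M.+1) T i + \sum_(1 <= i < M.+1) (S - T i).
  rewrite -big_split /=; under eq_bigr do rewrite addrC subrK.
  by rewrite sumr_const_nat subSS subn0 mulr_natl.
have factor_ar : \sum_(1 <= i < M.+1) T i =
    \sum_(0 <= k < N) ar (a + k%:Z) * \sum_(1 <= i < M.+1) aQ (a + k%:Z + (i * r)%N%:Z).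
  rewrite /T exchange_big /=; apply: eq_bigr => k _; rewrite mulr_sumr.
  by apply: eq_bigr => i _; rewrite hmul PoszD addrA (periodic_mul per_r).
rewrite -[M%:R]normr_nat -normrM split_S factor_ar.
apply: le_trans (ler_normD _ _) _; apply: lerD.
- apply: le_trans (ler_norm_sum _ _ _) _; apply: ler_sum => k _.
  by rewrite normrM ler_piMl.
- exact: norm_sum_shifts_le (fun k => aq (a + k%:Z)) _ _ _ (fun k => bnd_q _).
Qed.

Lemma sqr_div_le_of_split {R : numFieldType} {N M : nat} {s y z c : R} :
  (0 < N)%N -> (0 < M)%N -> 0 <= s -> 0 <= y -> 0 <= z ->
  M%:R * s <= y + z -> y ^+ 2 <= N%:R ^+ 2 * (M%:R + c) ->
  2 * z ^+ 2 <= 3 * N%:R ^+ 2 * M%:R ->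
  (s / N%:R) ^+ 2 <= 5 / M%:R + 2 / M%:R ^+ 2 * c.
Proof.
move=> N_gt0 M_gt0 s_ge0 y_ge0 z_ge0 Ms_le y_le z_le.
have N_neq0 : N%:R != 0 :> R by rewrite pnatr_eq0 -lt0n.
have M_neq0 : M%:R != 0 :> R by rewrite pnatr_eq0 -lt0n.
have key : (M%:R * s) ^+ 2 <= N%:R ^+ 2 * (5 * M%:R + 2 * c).
  apply: le_trans (_ : (y + z) ^+ 2 <= _).
    by rewrite ler_sqr ?nnegrE ?addr_ge0 ?mulr_ge0 ?ler0n.
  apply: le_trans (_ : 2 * y ^+ 2 + 2 * z ^+ 2 <= _).
    rewrite sqrrD (_ : 2 * y ^+ 2 + _ = y ^+ 2 + (y ^+ 2 + z ^+ 2) + z ^+ 2); last by ring.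
    by rewrite lerD2r lerD2l (real_leif_mean_square_scaled (ger0_real y_ge0) (ger0_real z_ge0)).
  rewrite (_ : _ * (_ + _) = 2 * (N%:R ^+ 2 * (M%:R + c)) + 3 * N%:R ^+ 2 * M%:R); last by ring.
  by rewrite lerD // ler_wpM2l.
have -> : (s / N%:R) ^+ 2 = (M%:R * s) ^+ 2 / (M%:R ^+ 2 * N%:R ^+ 2).
  by field; rewrite N_neq0 M_neq0.
have -> : 5 / M%:R + 2 / M%:R ^+ 2 * c =
    N%:R ^+ 2 * (5 * M%:R + 2 * c) / (M%:R ^+ 2 * N%:R ^+ 2).
  by field; rewrite N_neq0 M_neq0.
by rewrite ler_wpM2r // invr_ge0 mulr_ge0 ?exprn_ge0 ?ler0n.
Qed.

Theorem lemma6p3 (C : numClosedFieldType) (r Q N M : nat) (a : int) (aq ar aQ : int -> C)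
  (hr : (0 < r)%N) (hQ : (0 < Q)%N) (hcop : coprime r Q)
  (per_q : forall n : int, aq (n + (r * Q)%N%:Z) = aq n)
  (per_r : forall n : int, ar (n + r%:Z) = ar n)
  (per_Q : forall n : int, aQ (n + Q%:Z) = aQ n)
  (bnd_q : forall n : int, `|aq n| <= 1)
  (bnd_r : forall n : int, `|ar n| <= 1)
  (bnd_Q : forall n : int, `|aQ n| <= 1)
  (hmul : forall n : int, aq n = ar n * aQ n)
  (hN : (0 < N)%N) (hM : is_floor_pow23 N r M) (hM5 : (5 <= M)%N) :
  `|avgI a N aq| ^+ 2 <=
    5 / M%:R + 2 / (M%:R ^+ 2) *
      \sum_(1 <= i < M.+1) \sum_(1 <= j < M.+1 | i != j)
        `|avgI a N (fun n => aQ (n + (i * r)%N%:Z) * (aQ (n + (j * r)%N%:Z))^*)|.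
Proof.
set c := \sum_(1 <= i < M.+1) _.
pose y := \sum_(0 <= k < N) `|\sum_(1 <= i < M.+1) aQ (a + k%:Z + (i * r)%N%:Z)|.
have y_le : y ^+ 2 <= N%:R ^+ 2 * (M%:R + c).
  apply: le_trans (sqr_sum_le _ _ (fun k => normr_real _)) _.
  rewrite expr2 -mulrA ler_wpM2l ?ler0n // mulrDr -natrM.
  apply: le_trans (sum_sqr_norm_sum_le (fun k i => aQ (a + k%:Z + (i * r)%N%:Z)) N M
    (fun k i => bnd_Q _)) _.
  rewrite lerD2l /c mulr_sumr ler_sum // => i _; rewrite mulr_sumr ler_sum // => j _.
  by rewrite -normr_nat -normrM -sum_avgI.
have z_le : 2 * (M * M.+1 * r)%N%:R ^+ 2 <= 3 * N%:R ^+ 2 * M%:R :> C.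
  by rewrite -!natrX -!natrM ler_nat shift_error_sqr_le // hM.1.
have avg_aq : `|avgI a N aq| = `|\sum_(0 <= k < N) aq (a + k%:Z)| / N%:R.
  by rewrite /avgI normrM normfV normr_nat mulrC.
rewrite avg_aq; apply: (sqr_div_le_of_split hN _ _ _ _ _ y_le z_le).
- exact: leq_trans hM5.
- exact: normr_ge0.
- by apply: sumr_ge0 => k _.
- exact: ler0n.
- exact: norm_sum_le_shift_average per_r bnd_r bnd_q hmul.
Qed.
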